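(* Let $n\ge1$, $p\in[0,1)$, and let $\mathcal{D}(\rho)=(1-p)\rho+p\,\mathbb{I}/2^n$ be the $n$-qubit global depolarizing channel. Consider Probabilistic Error Cancellation using the optimal quasiprobability decomposition $$\mathcal{D}^{-1}=\Big(1+\frac{(2^{2n}-1)p}{2^{2n}(1-p)}\Big)\mathrm{id}-\sum_{i=1}^{2^{2n}-1}\frac{p}{2^{2n}(1-p)}\mathcal{P}_i,$$ where $\mathcal{P}_i(\rho)=P_i\rho P_i$ ranges over the non-identity $n$-qubit Pauli strings $P_i$, with error mitigation cost $\gamma$ equal to the sum of the squares of the coefficients in this decomposition, and assume perfect correction so that mitigated cost differences equal noise-free cost differences $\Delta C$ while noisy cost differences are $\Delta\widetilde{C}=(1-p)\Delta C$. Then, for any pair of points on the cost landscape with $\Delta C\ne0$, the relative resolvability $\chi_{depol}=\frac{1}{\gamma}\big(\frac{\Delta C}{\Delta\widetilde{C}}\big)^2$ satisfies $$\chi_{depol}=\frac{2^{2n}}{2^{2n}-p(2-p)}\ge1.$$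
   Context: Relative resolvability $\chi=\frac{1}{\gamma}(\Delta C_m/\Delta\widetilde{C})^2$ compares shots needed to resolve two cost values with and without mitigation; $\gamma$ is the error mitigation cost. *)

From mathcomp Require Import all_boot all_order all_algebra.
Set Implicit Arguments. Unset Strict Implicit. Unset Printing Implicit Defensive.
Import Order.TTheory GRing.Theory Num.Theory.
Local Open Scope ring_scope.

(* n-qubit Pauli strings, labelled by a letter in {I,X,Y,Z} = 'I_4 (0 = I)
   for each of the n qubits. *)
Definition pauli_string (n : nat) := {ffun 'I_n -> 'I_4}.

Definition pauli_id (n : nat) : pauli_string n := [ffun=> ord0].

Definition dim2 (R : ringType) (n : nat) : R := 2 ^+ (2 * n).

Definition pec_coef (R : fieldType) (n : nat) (p : R) (P : pauli_string n) : R :=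
  if P == pauli_id n then
    1 + (dim2 R n - 1) * p / (dim2 R n * (1 - p))
  else - (p / (dim2 R n * (1 - p))).

Definition pec_cost (R : fieldType) (n : nat) (p : R) : R :=
  \sum_(P : pauli_string n) (pec_coef p P) ^+ 2.

Definition rel_resolvability (R : fieldType) (gamma dCm dCnoisy : R) : R :=
  gamma^-1 * (dCm / dCnoisy) ^+ 2.

From mathcomp Require Import all_boot all_order all_algebra.
From mathcomp Require Import ring lra.
Import Order.TTheory GRing.Theory Num.Theory.
Local Open Scope ring_scope.

(* Summing the squared coefficients over the 4^n = d^2 Pauli strings gives
   gamma = (d^2 - p(2 - p)) / (d^2 (1 - p)^2), while perfect correction
   enlarges the cost difference by the factor 1/(1 - p); hence
   chi = d^2 / (d^2 - p(2 - p)), which is at least 1 because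
   0 <= p(2 - p) < 1 < d^2. *)

Lemma card_pauli_string (n : nat) : #|{: pauli_string n}| = (4 ^ n)%N.
Proof. by rewrite card_ffun !card_ord. Qed.

Lemma dim2E (R : nzRingType) (n : nat) : dim2 R n = (4 ^ n)%:R.
Proof. by rewrite /dim2 natrX exprM -natrX. Qed.

Lemma dim2_ge4 (R : numDomainType) {n : nat} : (1 <= n)%N -> 4 <= dim2 R n.
Proof.
move=> n_gt0; rewrite dim2E -[4 in X in X <= _]/(4 ^ 1)%:R ler_nat.
by rewrite leq_pexp2l.
Qed.

Lemma pec_cost_sum (R : fieldType) (n : nat) (p : R) :
  pec_cost n p = (1 + (dim2 R n - 1) * p / (dim2 R n * (1 - p))) ^+ 2
                 + (dim2 R n - 1) * (p / (dim2 R n * (1 - p))) ^+ 2.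
Proof.
rewrite /pec_cost (bigD1 (pauli_id n)) //= /pec_coef eqxx; congr (_ + _).
rewrite (eq_bigr (fun=> (p / (dim2 R n * (1 - p))) ^+ 2)); last first.
  by move=> P /negbTE ->; rewrite sqrrN.
rewrite sumr_const cardC1 card_pauli_string -mulr_natl; congr (_ * _).
by rewrite dim2E -subn1 natrB ?expn_gt0.
Qed.

Lemma pec_costE (R : fieldType) (n : nat) (p : R) :
  dim2 R n != 0 -> 1 - p != 0 ->
  pec_cost n p = (dim2 R n - p * (2 - p)) / (dim2 R n * (1 - p) ^+ 2).
Proof.
move=> D_neq0 q_neq0; rewrite pec_cost_sum.
by field; rewrite D_neq0 q_neq0.
Qed.

Lemma rel_resolvability_scaled (R : fieldType) (gamma q dC : R) :
  q != 0 -> dC != 0 ->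
  rel_resolvability gamma dC (q * dC) = (q ^+ 2 * gamma)^-1.
Proof.
move=> q_neq0 dC_neq0; rewrite /rel_resolvability.
have -> : dC / (q * dC) = q^-1 by field; rewrite q_neq0 dC_neq0.
by rewrite invfM exprVn mulrC.
Qed.

Theorem proposition5 (R : realFieldType) (n : nat) (p dC : R) :
  (1 <= n)%N -> 0 <= p -> p < 1 -> dC != 0 ->
  let chi := rel_resolvability (pec_cost n p) dC ((1 - p) * dC) in
  chi = dim2 R n / (dim2 R n - p * (2 - p)) /\ 1 <= chi.
Proof.
move=> n_gt0 p_ge0 p_lt1 dC_neq0 chi.
have D_ge4 := dim2_ge4 R n_gt0.
have q_neq0 : 1 - p != 0 by rewrite subr_eq0 eq_sym lt_eqF.
have D_neq0 : dim2 R n != 0 by rewrite gt_eqF //; lra.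
have E_gt0 : 0 < dim2 R n - p * (2 - p) by nra.
have chiE : chi = dim2 R n / (dim2 R n - p * (2 - p)).
  rewrite /chi rel_resolvability_scaled // pec_costE //.
  by field; rewrite D_neq0 q_neq0 gt_eqF.
split=> //; rewrite chiE ler_pdivlMr // mul1r; nra.
Qed.
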